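(* Consider the multiset combinatorial auction model described in the context and an iterative auction that first asks demand queries and then value queries, with truthful bidders, whose allocation after any set of reports is a solution of the winner determination problem (WDP) on the inferred values. Let $a^{DQ}$ be the WDP allocation computed from the reports after the last demand query. Suppose the first value-query round is the bridge bid, i.e., each bidder $i$ is asked a value query for the bundle $a^{DQ}_i$. Then, after the bridge bid and after any subsequent value queries, the efficiency of the WDP allocation is at least the efficiency of $a^{DQ}$, the efficiency achieved by the demand queries alone.
   Context: Multiset combinatorial auction: bidders $N=\{1,\dots,n\}$, items $M=\{1,\dots,m\}$ with capacities $c\in\mathbb{N}^m$. Bundles are $x\in\mathcal{X}=\{0,\dots,c_1\}\times\cdots\times\{0,\dots,c_m\}$. Each bidder $i$ has a value function $v_i:\mathcal{X}\to\mathbb{R}_{\ge0}$. Feasible allocations: $\mathcal{F}=\{a\in\mathcal{X}^n:\sum_i a_{ij}\le c_j\ \forall j\}$. Social welfare $V(a)=\sum_i v_i(a_i)$; efficiency of $a$ is $V(a)/\max_{a'\in\mathcal{F}}V(a')$. A demand query at prices $p\in\mathbb{R}^m_{\ge0}$ is answered truthfully by bidder $i$ with some $x_i^*(p)\in\arg\max_{x\in\mathcal{X}}\{v_i(x)-\langle p,x\rangle\}$; a value query for $x$ is answered with $v_i(x)$. With reports $R_i$ consisting of demand responses $R_i^{DQ}$ (pairs $(x,p)$) and value responses $R_i^{VQ}$ (pairs $(x,v_i(x))$), the inferred value is $\tilde v_i(x;R_i)=v_i(x)$ if $x$ appears in $R_i^{VQ}$ and otherwise $\max(\{\langle x,p\rangle:(x,p)\in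 R_i^{DQ}\}\cup\{0\})$. The WDP allocation is $a^*(R)\in\arg\max_{a\in\mathcal{F}}\sum_i\tilde v_i(a_i;R_i)$. *)

From HB Require Import structures.
From mathcomp Require Import all_boot all_order all_algebra.
Set Implicit Arguments. Unset Strict Implicit. Unset Printing Implicit Defensive.
Import Order.TTheory GRing.Theory Num.Theory.
Local Open Scope ring_scope.

(* Bundles x in X = {0..c_1} x ... x {0..c_m}: item j has multiplicity x j <= c j. *)
Definition bundle (m : nat) (c : 'I_m -> nat) : finType :=
  {dffun forall j : 'I_m, 'I_(c j).+1}.

Definition alloc (n m : nat) (c : 'I_m -> nat) : finType :=
  {ffun 'I_n -> bundle c}.

Definition feasible n m (c : 'I_m -> nat) (a : alloc n c) : bool :=
  [forall j : 'I_m, (\sum_(i < n) (a i j : nat) <= c j)%N].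

Definition pdot (R : numDomainType) m (c : 'I_m -> nat)
  (p : {ffun 'I_m -> R}) (x : bundle c) : R :=
  \sum_(j < m) p j * (x j : nat)%:R.

Definition welfare (R : numDomainType) n m (c : 'I_m -> nat)
  (v : 'I_n -> bundle c -> R) (a : alloc n c) : R :=
  \sum_(i < n) v i (a i).

(* max_{a' in F} V(a') (values are nonnegative, so 0 is a neutral default). *)
Definition opt_welfare (R : realDomainType) n m (c : 'I_m -> nat)
  (v : 'I_n -> bundle c -> R) : R :=
  \big[Num.max/0]_(a : alloc n c | feasible a) welfare v a.

Definition efficiency (R : realFieldType) n m (c : 'I_m -> nat)
  (v : 'I_n -> bundle c -> R) (a : alloc n c) : R :=
  welfare v a / opt_welfare v.

Definition truthful_demand (R : numDomainType) m (c : 'I_m -> nat)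
  (vi : bundle c -> R) (p : {ffun 'I_m -> R}) (x : bundle c) : Prop :=
  forall y : bundle c, vi y - pdot p y <= vi x - pdot p x.

(* Inferred value tilde v_i(x; R_i): the demand responses R_i^DQ are the
   (bundle, price) pairs dqi, the value responses R_i^VQ are the bundles in
   vqi, answered truthfully with v_i(x). *)
Definition inferred_value (R : realDomainType) m (c : 'I_m -> nat)
  (vi : bundle c -> R) (dqi : seq (bundle c * {ffun 'I_m -> R}))
  (vqi : seq (bundle c)) (x : bundle c) : R :=
  if x \in vqi then vi x
  else \big[Num.max/0]_(q <- dqi | q.1 == x) pdot q.2 x.

Definition is_WDP (R : realDomainType) n m (c : 'I_m -> nat)
  (v : 'I_n -> bundle c -> R)
  (dq : 'I_n -> seq (bundle c * {ffun 'I_m -> R}))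
  (vq : 'I_n -> seq (bundle c)) (a : alloc n c) : Prop :=
  feasible a /\
  forall b : alloc n c, feasible b ->
    \sum_(i < n) inferred_value (v i) (dq i) (vq i) (b i)
    <= \sum_(i < n) inferred_value (v i) (dq i) (vq i) (a i).

From HB Require Import structures.
From mathcomp Require Import all_boot all_order all_algebra.
Set Implicit Arguments. Unset Strict Implicit. Unset Printing Implicit Defensive.
Import Order.TTheory GRing.Theory Num.Theory.
Local Open Scope ring_scope.

(* A truthful demand response x at prices p is preferred to the empty bundle,
   so its price <p, x> never exceeds v(x); hence inferred values never exceed
   true values.  After the bridge bid every bundle of a^DQ carries its true
   value, so the WDP optimum for the inferred values has true welfare at least
   V(a^DQ), and efficiency is V divided by a common nonnegative optimum. *)

Definition bundle0 m (c : 'I_m -> nat) : bundle c := [ffun j => ord0].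

Lemma pdot_bundle0 (R : numDomainType) m (c : 'I_m -> nat)
  (p : {ffun 'I_m -> R}) : pdot p (bundle0 c) = 0.
Proof. by rewrite /pdot big1 // => j _; rewrite ffunE mulr0. Qed.

Lemma truthful_demand_pdot_le (R : numDomainType) m (c : 'I_m -> nat)
  (vi : bundle c -> R) (p : {ffun 'I_m -> R}) (x : bundle c) :
  0 <= vi (bundle0 c) -> truthful_demand vi p x -> pdot p x <= vi x.
Proof.
move=> vi0_ge0 /(_ (bundle0 c)); rewrite pdot_bundle0 subr0 => vi0_le.
by rewrite -subr_ge0; exact: le_trans vi0_ge0 vi0_le.
Qed.

Lemma inferred_value_mem (R : realDomainType) m (c : 'I_m -> nat)
  (vi : bundle c -> R) dqi vqi (x : bundle c) :
  x \in vqi -> inferred_value vi dqi vqi x = vi x.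
Proof. by rewrite /inferred_value => ->. Qed.

Lemma inferred_value_le (R : realDomainType) m (c : 'I_m -> nat)
  (vi : bundle c -> R) dqi vqi (x : bundle c) :
  (forall y, 0 <= vi y) ->
  (forall q, q \in dqi -> truthful_demand vi q.2 q.1) ->
  inferred_value vi dqi vqi x <= vi x.
Proof.
move=> vi_ge0 dqi_truthful; rewrite /inferred_value; case: ifP => // _.
rewrite big_seq_cond; apply: (big_ind (fun y => y <= vi x)) => //.
  by move=> y z yx zx; rewrite ge_max yx zx.
move=> q /andP[q_dqi /eqP <-].
exact: truthful_demand_pdot_le (vi_ge0 _) (dqi_truthful q q_dqi).
Qed.

Lemma welfare_le_WDP (R : realDomainType) n m (c : 'I_m -> nat)
  (v : 'I_n -> bundle c -> R) dq vq (a b : alloc n c) :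
  (forall i x, 0 <= v i x) ->
  (forall i q, q \in dq i -> truthful_demand (v i) q.2 q.1) ->
  feasible b -> (forall i, b i \in vq i) ->
  is_WDP v dq vq a -> welfare v b <= welfare v a.
Proof.
move=> v_ge0 dq_truthful b_feas b_queried [_ a_opt].
have <- : \sum_(i < n) inferred_value (v i) (dq i) (vq i) (b i) = welfare v b.
  by apply: eq_bigr => i _; exact: inferred_value_mem.
apply: le_trans (a_opt b b_feas) _; apply: ler_sum => i _.
exact: inferred_value_le (v_ge0 i) (dq_truthful i).
Qed.

Lemma opt_welfare_ge0 (R : realDomainType) n m (c : 'I_m -> nat)
  (v : 'I_n -> bundle c -> R) : 0 <= opt_welfare v.
Proof.
by apply: (big_rec (fun y => 0 <= y)) => // b y _ y_ge0; rewrite le_max y_ge0 orbT.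
Qed.

Lemma efficiency_le (R : realFieldType) n m (c : 'I_m -> nat)
  (v : 'I_n -> bundle c -> R) (a b : alloc n c) :
  welfare v a <= welfare v b -> efficiency v a <= efficiency v b.
Proof. by move=> ab; rewrite ler_wpM2r // invr_ge0 opt_welfare_ge0. Qed.

Theorem lemmaD9 (R : realFieldType) (n m : nat) (c : 'I_m -> nat)
  (v : 'I_n -> bundle c -> R)
  (hv : forall i x, 0 <= v i x)
  (dq : 'I_n -> seq (bundle c * {ffun 'I_m -> R}))
  (hdq : forall i q, q \in dq i ->
           (forall j, 0 <= q.2 j) /\ truthful_demand (v i) q.2 q.1)
  (aDQ : alloc n c)
  (haDQ : is_WDP v dq (fun _ => [::]) aDQ)
  (extra : 'I_n -> seq (bundle c))
  (a : alloc n c)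
  (ha : is_WDP v dq (fun i => aDQ i :: extra i) a) :
  efficiency v aDQ <= efficiency v a.
Proof.
apply: efficiency_le; apply: (welfare_le_WDP _ _ _ _ ha) => //.
- by move=> i q /hdq[].
- by case: haDQ.
- by move=> i; exact: mem_head.
Qed.
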